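(* Let $a_1,\ldots,a_k\ge 0$ and $d\in\mathbb{R}$, let $\mathbf{x}=[x_1,\ldots,x_k]^T\in\mathbb{R}^k$, and for $l=1,\ldots,k$ let $\mathbf{a}_l=[a_1,\ldots,a_l,0,\ldots,0]^T\in\mathbb{R}^k$. For $1\le l<k$ let $y_l=a_{l+1}\,\mathbf{a}_l^T\mathbf{x}-\|\mathbf{a}_l\|^2x_{l+1}$. If $\mathbf{a}_{l+1}^T\mathbf{x}>\tfrac12 d\|\mathbf{a}_{l+1}\|^2$ and $y_l>0$, then $\mathbf{a}_l^T\mathbf{x}>\tfrac12 d\|\mathbf{a}_l\|^2$. *)

From mathcomp Require Import all_boot all_order all_algebra.
Set Implicit Arguments. Unset Strict Implicit. Unset Printing Implicit Defensive.
Import Order.TTheory GRing.Theory Num.Theory.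
Local Open Scope ring_scope.

(* Vectors in R^k are functions 'I_k -> R; indices are 0-based:
   a_1..a_k of the paper are a 0 .. a (k-1). *)

Definition avec (R : ringType) (k : nat) (a : 'I_k -> R) (l : nat) : 'I_k -> R :=
  fun i => if (i < l)%N then a i else 0.

Definition dotv (R : ringType) (k : nat) (u v : 'I_k -> R) : R :=
  \sum_(i < k) u i * v i.

Definition sqnorm (R : ringType) (k : nat) (u : 'I_k -> R) : R := dotv u u.

From mathcomp Require Import all_boot all_order all_algebra.
From mathcomp Require Import ring lra.
Import Order.TTheory GRing.Theory Num.Theory.
Set Implicit Arguments. Unset Strict Implicit. Unset Printing Implicit Defensive.
Local Open Scope ring_scope.

(* Write S = a_l^T x, N = |a_l|^2 and b, t for the new coordinates a_{l+1}, x_{l+1}.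
   The identity
     (S - d/2 N)(N + b^2) = N (S + b t - d/2 (N + b^2)) + b (b S - N t)
   expresses the defect at level l through the defect at level l+1 and y_l = b S - N t.
   Both summands are nonnegative and one of them is positive, and N + b^2 > 0. *)

Lemma sum_if_ltS (R : nmodType) (k l : nat) (Hl : (l < k)%N) (F : 'I_k -> R) :
  \sum_(i < k) (if (i < l.+1)%N then F i else 0) =
  \sum_(i < k) (if (i < l)%N then F i else 0) + F (Ordinal Hl).
Proof.
rewrite (bigD1 (Ordinal Hl)) //= ltnSn [in RHS](bigD1 (Ordinal Hl)) //= ltnn.
rewrite add0r addrC; congr (_ + _); apply: eq_bigr => i neq_il.
rewrite ltnS leq_eqVlt; case: eqP => // eq_il.
by move: neq_il; rewrite -val_eqE /= eq_il eqxx.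
Qed.

Lemma dotv_avec (R : nzRingType) (k : nat) (a v : 'I_k -> R) (l : nat) :
  dotv (avec a l) v = \sum_(i < k) (if (i < l)%N then a i * v i else 0).
Proof. by apply: eq_bigr => i _; rewrite /avec; case: ifP; rewrite ?mul0r. Qed.

Lemma dotv_avecS (R : nzRingType) (k : nat) (a v : 'I_k -> R) (l : nat) (Hl : (l < k)%N) :
  dotv (avec a l.+1) v = dotv (avec a l) v + a (Ordinal Hl) * v (Ordinal Hl).
Proof. by rewrite !dotv_avec (sum_if_ltS Hl (fun i => a i * v i)). Qed.

Lemma sqnorm_avec (R : nzRingType) (k : nat) (a : 'I_k -> R) (l : nat) :
  sqnorm (avec a l) = \sum_(i < k) (if (i < l)%N then a i * a i else 0).
Proof.
by apply: eq_bigr => i _; rewrite /avec; case: ifP; rewrite ?mul0r.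
Qed.

Lemma sqnorm_avecS (R : nzRingType) (k : nat) (a : 'I_k -> R) (l : nat) (Hl : (l < k)%N) :
  sqnorm (avec a l.+1) = sqnorm (avec a l) + a (Ordinal Hl) * a (Ordinal Hl).
Proof. by rewrite !sqnorm_avec (sum_if_ltS Hl (fun i => a i * a i)). Qed.

Lemma sqnorm_ge0 (R : realDomainType) (k : nat) (u : 'I_k -> R) : 0 <= sqnorm u.
Proof. by apply: sumr_ge0 => i _; rewrite -expr2 sqr_ge0. Qed.

Lemma defect_step (R : realFieldType) (S N b t d : R) :
  0 <= N -> 0 <= b ->
  S + b * t > d / 2 * (N + b * b) -> b * S - N * t > 0 ->
  S > d / 2 * N.
Proof.
move=> N_ge0 b_ge0 next_gt y_gt0.
have weight_gt0 : 0 < N + b * b.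
  rewrite lt0r addr_ge0 ?mulr_ge0 // andbT paddr_eq0 ?mulr_ge0 // mulf_eq0 orbb.
  by apply: contraTN y_gt0 => /andP[/eqP-> /eqP->]; rewrite !mul0r subr0 ltxx.
have identity : (S - d / 2 * N) * (N + b * b) =
    N * (S + b * t - d / 2 * (N + b * b)) + b * (b * S - N * t) by ring.
have : 0 < (S - d / 2 * N) * (N + b * b).
  rewrite identity.
  have [N_gt0 | ] := ltrP 0 N.
    by rewrite ltr_pwDl ?mulr_ge0 ?mulr_gt0 ?(ltW y_gt0) // subr_gt0.
  rewrite le_eqVlt ltNge N_ge0 orbF => /eqP N0.
  rewrite {1}N0 mul0r add0r mulr_gt0 //.
  by move: weight_gt0; rewrite N0 add0r; nra.
by rewrite pmulr_lgt0 // subr_gt0.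
Qed.

Theorem lemma2 (R : realFieldType) (k : nat) (a : 'I_k -> R) (d : R) (x : 'I_k -> R)
  (ha : forall i, 0 <= a i) (l : nat) (Hl1 : (1 <= l)%N) (Hl : (l < k)%N) :
  let y := a (Ordinal Hl) * dotv (avec a l) x - sqnorm (avec a l) * x (Ordinal Hl) in
  dotv (avec a l.+1) x > d / 2 * sqnorm (avec a l.+1) ->
  y > 0 ->
  dotv (avec a l) x > d / 2 * sqnorm (avec a l).
Proof.
rewrite /= (dotv_avecS a x Hl) (sqnorm_avecS a Hl).
exact: defect_step (sqnorm_ge0 _) (ha _).
Qed.
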